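(* If $X$ is a Lindelöf $\Sigma$-space with $nw(X)\leq\mathfrak c$, then $|C(X)|\leq\mathfrak c$ and $w(X)\leq\mathfrak c$.
   Context: All spaces are Tychonoff. $C(X)$ is the set of continuous real-valued functions on $X$; $nw$ is network weight, $w$ weight, $\mathfrak c=2^\omega$. The Nagami number $Nag(X)$ is the minimal cardinality of a family $\mathcal F$ of closed subsets of $\beta X$ such that for every $x\in X$ and $y\in\beta X\setminus X$ there is $F\in\mathcal F$ with $x\in F$, $y\notin F$. $X$ is a Lindelöf $\Sigma$-space if $Nag(X)\leq\omega$. *)

From Stdlib Require Import Reals List.
Open Scope R_scope.

Record topology (T : Type) := Topology {
  is_open : (T -> Prop) -> Prop;
  open_full : is_open (fun _ => True);
  open_inter : forall U V, is_open U -> is_open V -> is_open (fun x => U x /\ V x);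
  open_union : forall F : (T -> Prop) -> Prop,
      (forall U, F U -> is_open U) -> is_open (fun x => exists U, F U /\ U x)
}.
Arguments is_open {T} _ _.

Definition is_closed {T} (t : topology T) (C : T -> Prop) : Prop :=
  is_open t (fun x => ~ C x).

Definition R_open (U : R -> Prop) : Prop :=
  forall x, U x -> exists eps, eps > 0 /\ forall y, Rabs (y - x) < eps -> U y.

Definition continuous_R {T} (t : topology T) (f : T -> R) : Prop :=
  forall U, R_open U -> is_open t (fun x => U (f x)).

Definition continuous_map {T S} (t : topology T) (s : topology S) (f : T -> S) : Prop :=
  forall U, is_open s U -> is_open t (fun x => U (f x)).

Definition T1 {T} (t : topology T) : Prop :=
  forall x y : T, x <> y -> exists U, is_open t U /\ U x /\ ~ U y.

Definition hausdorff {T} (t : topology T) : Prop :=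
  forall x y : T, x <> y -> exists U V, is_open t U /\ is_open t V /\ U x /\ V y /\
    forall z, ~ (U z /\ V z).

Definition tychonoff {T} (t : topology T) : Prop :=
  T1 t /\
  forall (C : T -> Prop) (x : T), is_closed t C -> ~ C x ->
    exists f : T -> R, continuous_R t f /\ f x = 0 /\ forall y, C y -> f y = 1.

Definition compact {T} (t : topology T) : Prop :=
  forall F : (T -> Prop) -> Prop,
    (forall U, F U -> is_open t U) -> (forall x, exists U, F U /\ U x) ->
    exists l : list (T -> Prop), (forall U, In U l -> F U) /\
      forall x, exists U, In U l /\ U x.

(* (K, e) is a Stone-Cech compactification of X: K compact Hausdorff,
   e a dense embedding, and every bounded continuous real function on X
   extends continuously to K. *)
Definition stone_cech {X K} (tX : topology X) (tK : topology K) (e : X -> K) : Prop :=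
  compact tK /\ hausdorff tK /\
  continuous_map tX tK e /\
  (forall x y, e x = e y -> x = y) /\
  (forall U, is_open tX U -> exists V, is_open tK V /\ forall x, U x <-> V (e x)) /\
  (forall V, is_open tK V -> (exists y, V y) -> exists x, V (e x)) /\
  (forall f : X -> R, continuous_R tX f -> (exists M, forall x, Rabs (f x) <= M) ->
     exists g : K -> R, continuous_R tK g /\ forall x, g (e x) = f x).

(* Nag(X) <= omega, computed in the Stone-Cech compactification (K, e). *)
Definition nagami_le_omega {X K} (tK : topology K) (e : X -> K) : Prop :=
  exists F : nat -> (K -> Prop),
    (forall n, is_closed tK (F n)) /\
    forall (x : X) (y : K), ~ (exists x', e x' = y) ->
      exists n, F n (e x) /\ ~ F n y.

(* The continuum c = |nat -> bool|. *)
Definition cont := nat -> bool.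

Definition nw_le_c {X} (tX : topology X) : Prop :=
  exists N : cont -> (X -> Prop),
    forall U x, is_open tX U -> U x ->
      exists i, N i x /\ forall y, N i y -> U y.

Definition w_le_c {X} (tX : topology X) : Prop :=
  exists B : cont -> (X -> Prop),
    (forall i, is_open tX (B i)) /\
    forall U x, is_open tX U -> U x ->
      exists i, B i x /\ forall y, B i y -> U y.

Definition card_CX_le_c {X} (tX : topology X) : Prop :=
  exists g : (X -> R) -> cont,
    forall f1 f2, continuous_R tX f1 -> continuous_R tX f2 -> g f1 = g f2 -> f1 = f2.

(* A Tychonoff space with a network of size c has a point-separating family
   (phi_i), i in c, of continuous functions.  Let (F_n) witness Nag(X) <= omega;
   for x in X the intersection C_x of all finite intersections of the F_n
   containing x is a compact subset of X inside betaX.  A tube-lemma argument on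
   C_x * C_y shows that every continuous f factors through countably many
   phi_i, and compactness of C_x shows that the sets
   (finite intersection of the F_n) /\ (rational box in those coordinates)
   form a countable network for f.  So f is determined by countably many
   indices in c and countably many bits: |C(X)| <= c^omega = c.  The sets
   {f < 1/2}, f in C(X), then form a base of size c. *)

From Pilot Require Import Defs.
From Stdlib Require Import Reals ZArith List Lra Lia PeanoNat Cantor.
From Stdlib Require Import Classical ClassicalEpsilon FunctionalExtensionality PropExtensionality.
Open Scope R_scope.

Ltac decode_nat := repeat (rewrite Cantor.cancel_of_to; cbn iota beta).
Ltac decode_nat_in H := repeat (rewrite Cantor.cancel_of_to in H; cbn iota beta in H).

Section OpenSets.
Context {T : Type} (t : topology T).

Lemma open_ext (U V : T -> Prop) : (forall x, U x <-> V x) -> is_open t U -> is_open t V.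
Proof.
  intros HUV HU; replace V with U; [exact HU |].
  apply functional_extensionality; intros x; apply propositional_extensionality, HUV.
Qed.

Lemma open_empty : is_open t (fun _ => False).
Proof.
  apply (open_ext (fun x => exists U, False /\ U x)); [firstorder |].
  apply open_union; tauto.
Qed.

Lemma open_or (U V : T -> Prop) :
  is_open t U -> is_open t V -> is_open t (fun x => U x \/ V x).
Proof.
  intros HU HV; apply (open_ext (fun x => exists W, (W = U \/ W = V) /\ W x)).
  - intros x; split; [intros [W [[-> | ->] Hx]]; auto | intros [Hx | Hx]; eauto].
  - apply open_union; intros W [-> | ->]; assumption.
Qed.

Lemma closed_compl (U : T -> Prop) : is_open t U -> is_closed t (fun x => ~ U x).
Proof.
  intros HU; apply (open_ext U); [intros x; split; [tauto | apply NNPP] | exact HU].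
Qed.

Lemma closed_and (A B : T -> Prop) :
  is_closed t A -> is_closed t B -> is_closed t (fun x => A x /\ B x).
Proof.
  intros HA HB; apply (open_ext (fun x => ~ A x \/ ~ B x)); [intros; tauto | now apply open_or].
Qed.

Lemma closed_all {I : Type} (A : I -> T -> Prop) :
  (forall i, is_closed t (A i)) -> is_closed t (fun x => forall i, A i x).
Proof.
  intros HA; apply (open_ext (fun x => exists W, (exists i, W = fun y => ~ A i y) /\ W x)).
  - intros x; split.
    + intros [W [[i ->] Hx]] Hall; exact (Hx (Hall i)).
    + intros Hx; destruct (not_all_ex_not _ _ Hx) as [i Hi].
      exists (fun y => ~ A i y); split; [now exists i | exact Hi].
  - apply open_union; intros W [i ->]; apply HA.
Qed.

Lemma closed_imp (P : Prop) (A : T -> Prop) :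
  (P -> is_closed t A) -> is_closed t (fun x => P -> A x).
Proof.
  intros HA; destruct (classic P) as [p | np].
  - apply (open_ext (fun x => ~ A x)); [intros; tauto | exact (HA p)].
  - apply (open_ext (fun _ => False)); [intros; tauto | apply open_empty].
Qed.

Lemma const_continuous (c : R) : continuous_R t (fun _ => c).
Proof.
  intros U _; destruct (classic (U c)).
  - apply (open_ext (fun _ => True)); [tauto | apply open_full].
  - apply (open_ext (fun _ => False)); [tauto | apply open_empty].
Qed.

End OpenSets.

Section Compactness.
Context {K : Type} (tK : topology K) (HK : Defs.compact tK).

Lemma compact_cover_combine (P : (K -> Prop) -> Prop) (D : K -> Prop) :
  is_closed tK D -> P (fun _ => False) ->
  (forall V1 V2, P V1 -> P V2 -> P (fun z => V1 z \/ V2 z)) ->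
  (forall d, D d -> exists V, is_open tK V /\ V d /\ P V) ->
  exists V, is_open tK V /\ (forall d, D d -> V d) /\ P V.
Proof.
  intros HD Hempty Hunion Hloc.
  destruct (HK (fun W => W = (fun z => ~ D z) \/ (is_open tK W /\ P W))) as [l [Hl Hcov]].
  - intros W [-> | [HW _]]; [exact HD | exact HW].
  - intros z; destruct (classic (D z)) as [Dz | Dz].
    + destruct (Hloc z Dz) as [V [HV [Vz PV]]]; exists V; auto.
    + exists (fun z => ~ D z); auto.
  - assert (Hfin : exists V, is_open tK V /\ P V /\ forall W z, In W l -> W z -> D z -> V z).
    { clear Hcov; induction l as [| W l IH].
      - exists (fun _ => False); split; [apply open_empty | split; [exact Hempty | intros W z []]].
      - destruct IH as [V [HV [PV HVl]]]; [intros W' HW'; apply Hl; now right |].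
        destruct (Hl W (or_introl eq_refl)) as [-> | [HW PW]].
        + exists V; split; [exact HV | split; [exact PV |]].
          intros W' z [<- | HW'] Wz Dz; [contradiction | eauto].
        + exists (fun z => V z \/ W z); split; [now apply open_or | split; [auto |]].
          intros W' z [<- | HW'] Wz Dz; [now right | left; eauto]. }
    destruct Hfin as [V [HV [PV HVl]]]; exists V; split; [exact HV | split; [| exact PV]].
    intros d Dd; destruct (Hcov d) as [W [HW Wd]]; eauto.
Qed.

Lemma compact_tube {Idx : Type} (Rel : Idx -> K -> K -> Prop) (C D : K -> Prop) :
  is_closed tK C -> is_closed tK D ->
  (forall c d, C c -> D d -> exists a U V, is_open tK U /\ is_open tK V /\ U c /\ V d /\
     forall z w, U z -> V w -> Rel a z w) ->
  exists U V (L : list Idx), is_open tK U /\ is_open tK V /\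
    (forall c, C c -> U c) /\ (forall d, D d -> V d) /\
    forall z w, U z -> V w -> exists a, In a L /\ Rel a z w.
Proof.
  intros HC HD Hrect.
  set (good := fun U V => exists L, forall z w, U z -> V w -> exists a, In a L /\ Rel a z w).
  assert (good_nil : forall U V, (forall z w, U z -> V w -> False) -> good U V).
  { intros U V H; exists nil; intros z w Uz Vw; destruct (H z w Uz Vw). }
  assert (good_merge : forall U1 V1 U2 V2 U V, good U1 V1 -> good U2 V2 ->
            (forall z w, U z -> V w -> (U1 z /\ V1 w) \/ (U2 z /\ V2 w)) -> good U V).
  { intros U1 V1 U2 V2 U V [L1 H1] [L2 H2] H; exists (L1 ++ L2); intros z w Uz Vw.
    destruct (H z w Uz Vw) as [[Hz Hw] | [Hz Hw]];
      [destruct (H1 z w Hz Hw) as [a [Ha Ra]] | destruct (H2 z w Hz Hw) as [a [Ha Ra]]];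
      exists a; split; auto; apply in_or_app; auto. }
  assert (Hslice : forall c, C c -> exists U, is_open tK U /\ U c /\
            exists V, is_open tK V /\ (forall d, D d -> V d) /\ good U V).
  { intros c Cc.
    destruct (compact_cover_combine (fun V => exists U, is_open tK U /\ U c /\ good U V) D HD)
      as [V [HV [DV [U [HU [Uc gUV]]]]]].
    - exists (fun _ => True); split; [apply open_full | split; [exact I | now apply good_nil]].
    - intros V1 V2 [U1 [HU1 [U1c g1]]] [U2 [HU2 [U2c g2]]].
      exists (fun z => U1 z /\ U2 z); split; [now apply open_inter | split; [auto |]].
      apply (good_merge U1 V1 U2 V2); auto; intros z w [] []; auto.
    - intros d Dd; destruct (Hrect c d Cc Dd) as [a [U [V [HU [HV [Uc [Vd HR]]]]]]].
      exists V; split; [exact HV | split; [exact Vd |]].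
      exists U; split; [exact HU | split; [exact Uc |]].
      exists (a :: nil); intros z w Uz Vw; exists a; split; [now left | auto].
    - exists U; split; [exact HU | split; [exact Uc |]]; exists V; auto. }
  destruct (compact_cover_combine
              (fun U => exists V, is_open tK V /\ (forall d, D d -> V d) /\ good U V) C HC)
    as [U [HU [CU [V [HV [DV [L HL]]]]]]].
  - exists (fun _ => True); split; [apply open_full | split; [auto | now apply good_nil]].
  - intros U1 U2 [V1 [HV1 [DV1 g1]]] [V2 [HV2 [DV2 g2]]].
    exists (fun w => V1 w /\ V2 w); split; [now apply open_inter | split; [auto |]].
    apply (good_merge U1 V1 U2 V2); auto; intros z w [] []; auto.
  - intros c Cc; destruct (Hslice c Cc) as [U [HU [Uc HV]]]; eauto.
  - exists U, V, L; auto.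
Qed.

End Compactness.

Section FiniteIntersections.
Context {T : Type}.

Definition fin_inter (S : nat -> T -> Prop) (mask : nat) (z : T) : Prop :=
  forall k, Nat.testbit mask k = true -> S k z.

Lemma fin_inter_lor (S : nat -> T -> Prop) a b z :
  fin_inter S (Nat.lor a b) z <-> fin_inter S a z /\ fin_inter S b z.
Proof.
  unfold fin_inter; split.
  - intros H; split; intros k Hk; apply H; rewrite Nat.lor_spec, Hk; auto with bool.
  - intros [Ha Hb] k Hk; rewrite Nat.lor_spec in Hk.
    apply Bool.orb_true_iff in Hk; destruct Hk; auto.
Qed.

Lemma mask_exists (l : list nat) : exists mask, forall k, Nat.testbit mask k = true <-> In k l.
Proof.
  induction l as [| a l [mask IH]].
  - exists 0%nat; intros k; rewrite Nat.bits_0; split; [discriminate | intros []].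
  - exists (Nat.lor (2 ^ a) mask); intros k.
    rewrite Nat.lor_spec, Nat.pow2_bits_eqb, Bool.orb_true_iff, IH, Nat.eqb_eq; simpl.
    split; intros [H | H]; auto.
Qed.

Lemma fin_inter_list (S : nat -> T -> Prop) (l : list nat) :
  exists mask, forall z, fin_inter S mask z <-> forall k, In k l -> S k z.
Proof.
  destruct (mask_exists l) as [mask Hmask]; exists mask; intros z; unfold fin_inter.
  split; intros H k Hk; apply H, Hmask, Hk.
Qed.

Lemma fin_inter_closed (t : topology T) (S : nat -> T -> Prop) mask :
  (forall k, is_closed t (S k)) -> is_closed t (fin_inter S mask).
Proof. intros HS; apply closed_all; intros k; apply closed_imp; auto. Qed.

End FiniteIntersections.

Definition rat_enum (n : nat) : R :=
  let (a, b) := Cantor.of_nat n in let (c, d) := Cantor.of_nat a in (INR c - INR d) / INR (S b).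

Lemma IZR_as_difference (k : Z) : IZR k = INR (Z.to_nat k) - INR (Z.to_nat (- k)).
Proof.
  destruct k as [| p | p]; simpl; [lra | |];
    rewrite INR_IZR_INZ, Znat.positive_nat_Z; [simpl | rewrite <- Pos2Z.opp_pos, opp_IZR]; lra.
Qed.

Lemma rat_enum_dense x y : x < y -> exists n, x < rat_enum n < y.
Proof.
  intros Hxy; destruct (archimed_cor1 (y - x)) as [N [HN1 HN2]]; [lra |].
  assert (HN : 0 < INR N) by (apply lt_0_INR; auto).
  assert (HNyx : 1 < (y - x) * INR N)
    by (rewrite <- (Rinv_l (INR N)) by lra; apply Rmult_lt_compat_r; lra).
  destruct (archimed (x * INR N)) as [Hk1 Hk2]; set (k := up (x * INR N)) in *.
  exists (Cantor.to_nat (Cantor.to_nat (Z.to_nat k, Z.to_nat (- k)), Nat.pred N)).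
  unfold rat_enum; decode_nat; rewrite <- IZR_as_difference.
  replace (S (Nat.pred N)) with N by lia.
  split; apply (Rmult_lt_reg_r (INR N)); auto; unfold Rdiv;
    rewrite Rmult_assoc, Rinv_l by lra; lra.
Qed.

Lemma rat_enum_between x y : x < y -> exists a b, x < rat_enum a /\ rat_enum a < rat_enum b /\ rat_enum b < y.
Proof.
  intros H; destruct (rat_enum_dense x ((x + y) / 2)) as [a Ha]; [lra |].
  destruct (rat_enum_dense ((x + y) / 2) y) as [b Hb]; [lra |]; exists a, b; lra.
Qed.

Lemma rat_enum_slab (v w : R) : v <> w ->
  exists r s, rat_enum r <= w <= rat_enum s /\ (v < rat_enum r \/ rat_enum s < v).
Proof.
  intros Hvw; destruct (Rtotal_order v w) as [H | [H | H]]; [| contradiction |].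
  - destruct (rat_enum_dense v w H) as [r Hr]; destruct (rat_enum_dense w (w + 1)) as [s Hs]; [lra |].
    exists r, s; lra.
  - destruct (rat_enum_dense w v H) as [s Hs]; destruct (rat_enum_dense (w - 1) w) as [r Hr]; [lra |].
    exists r, s; lra.
Qed.

Lemma R_open_lt a : R_open (fun v => v < a).
Proof. intros x Hx; exists (a - x); split; [lra | intros y Hy; apply Rabs_def2 in Hy; lra]. Qed.

Lemma R_open_gt a : R_open (fun v => a < v).
Proof. intros x Hx; exists (x - a); split; [lra | intros y Hy; apply Rabs_def2 in Hy; lra]. Qed.

Lemma R_open_outside a b : R_open (fun v => v < a \/ b < v).
Proof.
  intros x [Hx | Hx]; [destruct (R_open_lt a x Hx) as [eps [Heps H]] | destruct (R_open_gt b x Hx) as [eps [Heps H]]];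
    exists eps; split; auto.
Qed.

Lemma R_open_ball c r : R_open (fun v => Rabs (v - c) < r).
Proof.
  intros x Hx; exists (r - Rabs (x - c)); split; [lra |].
  intros y Hy; pose proof (Rabs_triang (y - x) (x - c)) as Ht.
  replace (y - x + (x - c)) with (y - c) in Ht by ring; lra.
Qed.

Definition bool_of (P : Prop) : bool := if excluded_middle_informative P then true else false.

Lemma bool_of_true (P : Prop) : bool_of P = true <-> P.
Proof. unfold bool_of; destruct (excluded_middle_informative P); split; auto; discriminate. Qed.

Lemma enumerate_lists {A : Type} (a0 : A) (Ls : nat -> list A) :
  exists J : nat -> A, forall u a, In a (Ls u) -> exists k, J k = a.
Proof.
  exists (fun k => let (u, j) := Cantor.of_nat k in nth j (Ls u) a0).
  intros u a Ha; destruct (In_nth _ _ a0 Ha) as [j [_ Hj]].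
  exists (Cantor.to_nat (u, j)); decode_nat; exact Hj.
Qed.

Definition cont_seq (s : nat -> cont) : cont := fun w => let (k, n) := Cantor.of_nat w in s k n.

Definition cont_proj (c : cont) (k : nat) : cont := fun n => c (Cantor.to_nat (k, n)).

Lemma cont_proj_seq (s : nat -> cont) k : cont_proj (cont_seq s) k = s k.
Proof. apply functional_extensionality; intros n; unfold cont_proj, cont_seq; now decode_nat. Qed.

Lemma cont_seq_inj (s1 s2 : nat -> cont) : cont_seq s1 = cont_seq s2 -> s1 = s2.
Proof.
  intros H; apply functional_extensionality; intros k.
  now rewrite <- (cont_proj_seq s1), <- (cont_proj_seq s2), H.
Qed.

Section Networks.
Context {X : Type}.

Definition network_for (B : nat -> X -> Prop) (f : X -> R) : Prop :=
  forall x eps, 0 < eps -> exists m, B m x /\ forall y, B m y -> Rabs (f y - f x) < eps.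

Definition bounded_on (B : nat -> X -> Prop) (f : X -> R) (w : nat) : Prop :=
  let (m, ab) := Cantor.of_nat w in let (a, b) := Cantor.of_nat ab in
  forall y, B m y -> rat_enum a < f y < rat_enum b.

Lemma network_determines (B : nat -> X -> Prop) (f1 f2 : X -> R) :
  network_for B f1 -> (forall w, bounded_on B f1 w -> bounded_on B f2 w) -> f1 = f2.
Proof.
  intros Hnet Hbd; apply functional_extensionality; intros x; apply NNPP; intros Hne.
  assert (Hd : 0 < Rabs (f1 x - f2 x)) by (apply Rabs_pos_lt; intros H; apply Hne; lra).
  set (d := Rabs (f1 x - f2 x)) in Hd.
  destruct (Hnet x (d / 3)) as [m [Hmx Hm]]; [lra |].
  destruct (rat_enum_dense (f1 x - 2 * (d / 3)) (f1 x - d / 3)) as [a Ha]; [lra |].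
  destruct (rat_enum_dense (f1 x + d / 3) (f1 x + 2 * (d / 3))) as [b Hb]; [lra |].
  specialize (Hbd (Cantor.to_nat (m, Cantor.to_nat (a, b)))); unfold bounded_on in Hbd.
  decode_nat_in Hbd.
  assert (H2 : rat_enum a < f2 x < rat_enum b).
  { apply Hbd; [| exact Hmx]; intros y Hy; specialize (Hm y Hy); apply Rabs_def2 in Hm; lra. }
  assert (Rabs (f1 x - f2 x) < 2 * (d / 3)) by (apply Rabs_def1; lra).
  unfold d in *; lra.
Qed.

End Networks.

Section Fibers.
Context {X K : Type} (tX : topology X) (tK : topology K) (e : X -> K) (F : nat -> K -> Prop).
Hypothesis HK : Defs.compact tK.
Hypothesis HF : forall k, is_closed tK (F k).
Hypothesis Htrace : forall U, is_open tX U -> exists V, is_open tK V /\ forall x, U x <-> V (e x).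
Hypothesis Hnag : forall x y, ~ (exists x', e x' = y) -> exists k, F k (e x) /\ ~ F k y.

Definition fiber (x : X) (z : K) : Prop := forall n, fin_inter F n (e x) -> fin_inter F n z.

Lemma fiber_closed x : is_closed tK (fiber x).
Proof.
  apply closed_all; intros n; apply closed_imp; intros _; apply fin_inter_closed; exact HF.
Qed.

Lemma fiber_in_image x z : fiber x z -> exists u, e u = z.
Proof.
  intros Hz; apply NNPP; intros Hout; destruct (Hnag x z Hout) as [k [Hkx Hkz]].
  destruct (fin_inter_list F (k :: nil)) as [mask Hmask].
  apply Hkz, (proj1 (Hmask z)); [apply Hz, Hmask | now left].
  intros j [<- | []]; exact Hkx.
Qed.

Lemma fiber_neighbourhood x (Z V : K -> Prop) :
  is_closed tK Z -> is_open tK V -> (forall z, fiber x z -> Z z -> V z) ->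
  exists n, fin_inter F n (e x) /\ forall z, fin_inter F n z -> Z z -> V z.
Proof.
  intros HZ HV HZV.
  destruct (compact_cover_combine tK HK
              (fun W => exists n, fin_inter F n (e x) /\ forall z, W z -> ~ fin_inter F n z)
              (fun z => Z z /\ ~ V z)) as [W [_ [HW [n [Hn HnW]]]]].
  - apply closed_and; [exact HZ | now apply closed_compl].
  - exists 0%nat; split; [intros k Hk; rewrite Nat.bits_0 in Hk; discriminate | intros z []].
  - intros W1 W2 [n1 [H1x H1]] [n2 [H2x H2]]; exists (Nat.lor n1 n2).
    split; [now apply fin_inter_lor |].
    intros z [Wz | Wz] Hz; apply fin_inter_lor in Hz; [exact (H1 z Wz (proj1 Hz)) | exact (H2 z Wz (proj2 Hz))].
  - intros z [Zz Vz].
    assert (Hz : ~ fiber x z) by (intros Hf; exact (Vz (HZV z Hf Zz))).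
    apply not_all_ex_not in Hz; destruct Hz as [n Hn]; apply imply_to_and in Hn.
    exists (fun w => ~ fin_inter F n w); split; [now apply fin_inter_closed |].
    split; [tauto | exists n; split; [tauto | auto]].
  - exists n; split; [exact Hn |]; intros z Hz Zz; apply NNPP; intros Vz.
    exact (HnW z (HW z (conj Zz Vz)) Hz).
Qed.

Lemma trace_preimage (f : X -> R) (W : R -> Prop) :
  continuous_R tX f -> R_open W -> exists V, is_open tK V /\ forall x, W (f x) <-> V (e x).
Proof. intros Hf HW; exact (Htrace _ (Hf W HW)). Qed.

Lemma separate_values (h : X -> R) u v : continuous_R tX h -> h u <> h v ->
  exists U V, is_open tK U /\ is_open tK V /\ U (e u) /\ V (e v) /\
    forall x x', U (e x) -> V (e x') -> h x <> h x'.
Proof.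
  intros Hh Huv.
  assert (Hr : 0 < Rabs (h u - h v) / 2).
  { assert (0 < Rabs (h u - h v)) by (apply Rabs_pos_lt; intros H; apply Huv; lra); lra. }
  set (r := Rabs (h u - h v) / 2) in Hr.
  destruct (trace_preimage h _ Hh (R_open_ball (h u) r)) as [U [HU HUe]].
  destruct (trace_preimage h _ Hh (R_open_ball (h v) r)) as [V [HV HVe]].
  exists U, V; split; [exact HU | split; [exact HV | split; [| split]]].
  - apply HUe; rewrite Rminus_diag, Rabs_R0; exact Hr.
  - apply HVe; rewrite Rminus_diag, Rabs_R0; exact Hr.
  - intros x x' Hx Hx' Heq; apply HUe, Rabs_def2 in Hx; apply HVe, Rabs_def2 in Hx'.
    assert (Rabs (h u - h v) < 2 * r) by (apply Rabs_def1; lra).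
    unfold r in *; lra.
Qed.

Section SeparatingFamily.
Context {Idx : Type} (Phi : Idx -> X -> R).
Hypothesis HPhi : forall i, continuous_R tX (Phi i).
Hypothesis Hsep : forall x y, x <> y -> exists i, Phi i x <> Phi i y.

Lemma separate_level_sets (f : X -> R) x y a b :
  continuous_R tX f -> f x < a -> a < b -> b < f y ->
  exists n m L, fin_inter F n (e x) /\ fin_inter F m (e y) /\
    forall y0 y1, fin_inter F n (e y0) -> f y0 <= a -> fin_inter F m (e y1) -> b <= f y1 ->
      exists i, In i L /\ Phi i y0 <> Phi i y1.
Proof.
  intros Hf Hxa Hab Hby.
  destruct (trace_preimage f (fun v => a < v) Hf (R_open_gt a)) as [Va [HVa HVae]].
  destruct (trace_preimage f (fun v => v < b) Hf (R_open_lt b)) as [Vb [HVb HVbe]].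
  destruct (compact_tube tK HK (fun i z w => forall x0 x1, e x0 = z -> e x1 = w -> Phi i x0 <> Phi i x1)
              (fun z => fiber x z /\ ~ Va z) (fun z => fiber y z /\ ~ Vb z))
    as [U [V [L [HU [HV [HCU [HDV HUV]]]]]]].
  - apply closed_and; [apply fiber_closed | now apply closed_compl].
  - apply closed_and; [apply fiber_closed | now apply closed_compl].
  - intros c d [Hc Vc] [Hd Vd].
    destruct (fiber_in_image x c Hc) as [u <-]; destruct (fiber_in_image y d Hd) as [v <-].
    assert (Hu : f u <= a) by (apply Rnot_lt_le; intros H; apply Vc, HVae, H).
    assert (Hv : b <= f v) by (apply Rnot_lt_le; intros H; apply Vd, HVbe, H).
    destruct (Hsep u v) as [i Hi]; [intros <-; lra |].
    destruct (separate_values (Phi i) u v (HPhi i) Hi) as [U [V [HU [HV [Uu [Vv HUV]]]]]].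
    exists i, U, V; repeat split; auto.
    intros z w Uz Vw x0 x1 <- <-; auto.
  - destruct (fiber_neighbourhood x (fun z => ~ Va z) U) as [n [Hn HnU]];
      [now apply closed_compl | exact HU | intros z Hz Vz; apply HCU; auto |].
    destruct (fiber_neighbourhood y (fun z => ~ Vb z) V) as [m [Hm HmV]];
      [now apply closed_compl | exact HV | intros z Hz Vz; apply HDV; auto |].
    exists n, m, L; split; [exact Hn | split; [exact Hm |]].
    intros y0 y1 Hy0 Hfy0 Hy1 Hfy1.
    assert (U (e y0)) by (apply HnU; [exact Hy0 | rewrite <- HVae; lra]).
    assert (V (e y1)) by (apply HmV; [exact Hy1 | rewrite <- HVbe; lra]).
    destruct (HUV (e y0) (e y1)) as [i [Hi HR]]; auto.
    exists i; split; auto.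
Qed.

Definition factors_through (J : nat -> Idx) (f : X -> R) : Prop :=
  forall x y, (forall k, Phi (J k) x = Phi (J k) y) -> f x = f y.

Lemma factors_countably (i0 : Idx) (f : X -> R) :
  continuous_R tX f -> exists J, factors_through J f.
Proof.
  intros Hf.
  set (Separates := fun (u : nat) (L : list Idx) =>
    let (ab, nm) := Cantor.of_nat u in let (a, b) := Cantor.of_nat ab in let (n, m) := Cantor.of_nat nm in
    forall y0 y1, fin_inter F n (e y0) -> f y0 <= rat_enum a ->
      fin_inter F m (e y1) -> rat_enum b <= f y1 -> exists i, In i L /\ Phi i y0 <> Phi i y1).
  destruct (choice (fun u L => (exists L', Separates u L') -> Separates u L)) as [Lsel HLsel].
  { intros u; destruct (classic (exists L', Separates u L')) as [[L' HL'] | Hno];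
      [exists L'; auto | exists nil; tauto]. }
  destruct (enumerate_lists i0 Lsel) as [J HJ]; exists J.
  assert (Hlt : forall x y, (forall k, Phi (J k) x = Phi (J k) y) -> ~ f x < f y).
  { intros x y Hk Hxy; destruct (rat_enum_between _ _ Hxy) as [a [b [Ha [Hab Hb]]]].
    destruct (separate_level_sets f x y _ _ Hf Ha Hab Hb) as [n [m [L [Hn [Hm HL]]]]].
    set (u := Cantor.to_nat (Cantor.to_nat (a, b), Cantor.to_nat (n, m))).
    assert (Hu : Separates u (Lsel u)) by (apply HLsel; exists L; unfold Separates, u; decode_nat; exact HL).
    unfold Separates, u in Hu; decode_nat_in Hu.
    destruct (Hu x y Hn (Rlt_le _ _ Ha) Hm (Rlt_le _ _ Hb)) as [i [Hi Hne]].
    destruct (HJ _ _ Hi) as [k <-]; exact (Hne (Hk k)). }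
  intros x y Hk; destruct (Rtotal_order (f x) (f y)) as [H | [H | H]]; [| exact H |]; exfalso.
  - exact (Hlt x y Hk H).
  - apply (Hlt y x); [intros k; symmetry; apply Hk | exact H].
Qed.

Definition slab (J : nat -> Idx) (t : nat) (y : X) : Prop :=
  let (k, rs) := Cantor.of_nat t in let (r, s) := Cantor.of_nat rs in
  rat_enum r <= Phi (J k) y <= rat_enum s.

Definition box (J : nat -> Idx) (m : nat) (y : X) : Prop :=
  let (n, mask) := Cantor.of_nat m in fin_inter F n (e y) /\ fin_inter (slab J) mask y.

Lemma slab_separates (J : nat -> Idx) (f : X -> R) x u :
  factors_through J f -> f u <> f x ->
  exists t U, is_open tK U /\ U (e u) /\ slab J t x /\ forall y, U (e y) -> ~ slab J t y.
Proof.
  intros Hfac Hfu.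
  assert (Hk : exists k, Phi (J k) u <> Phi (J k) x).
  { apply NNPP; intros Hno; apply Hfu, Hfac; intros k; apply NNPP; intros Hne; apply Hno; eauto. }
  destruct Hk as [k Hk]; destruct (rat_enum_slab _ _ Hk) as [r [s [Hx Hu]]].
  destruct (trace_preimage (Phi (J k)) _ (HPhi _) (R_open_outside (rat_enum r) (rat_enum s)))
    as [U [HU HUe]].
  assert (Hslab : forall y, slab J (Cantor.to_nat (k, Cantor.to_nat (r, s))) y <->
                            rat_enum r <= Phi (J k) y <= rat_enum s)
    by (intros y; unfold slab; decode_nat; tauto).
  exists (Cantor.to_nat (k, Cantor.to_nat (r, s))), U.
  split; [exact HU | split; [now apply HUe | split; [now apply Hslab |]]].
  intros y HUy Hy; apply Hslab in Hy; apply HUe in HUy; lra.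
Qed.

Lemma box_network (J : nat -> Idx) (f : X -> R) :
  continuous_R tX f -> factors_through J f -> network_for (box J) f.
Proof.
  intros Hf Hfac x eps Heps.
  destruct (trace_preimage f (fun v => Rabs (v - f x) < eps) Hf (R_open_ball _ _)) as [V0 [HV0 HV0e]].
  set (Avoid := fun t z =>
    exists U, (is_open tK U /\ slab J t x /\ forall y, U (e y) -> ~ slab J t y) /\ U z).
  destruct (compact_cover_combine tK HK (fun V => exists L, forall z, V z -> exists t, In t L /\ Avoid t z)
              (fun z => fiber x z /\ ~ V0 z)) as [V [HV [HfarV [L HL]]]].
  - apply closed_and; [apply fiber_closed | now apply closed_compl].
  - exists nil; intros z [].
  - intros V1 V2 [L1 H1] [L2 H2]; exists (L1 ++ L2); intros z [Hz | Hz];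
      [destruct (H1 z Hz) as [t [Ht At]] | destruct (H2 z Hz) as [t [Ht At]]];
      exists t; split; auto; apply in_or_app; auto.
  - intros z [Hz Vz]; destruct (fiber_in_image x z Hz) as [u <-].
    assert (Hfu : f u <> f x) by (intros Heq; apply Vz, HV0e; rewrite Heq, Rminus_diag, Rabs_R0; exact Heps).
    destruct (slab_separates J f x u Hfac Hfu) as [t [U [HU [Uu Hslab]]]].
    exists (Avoid t); split; [apply open_union; intros W [HW _]; exact HW |].
    split; [exists U; auto | exists (t :: nil); intros w Hw; exists t; split; [now left | exact Hw]].
  - destruct (fiber_neighbourhood x (fun z => ~ V0 z) V) as [n [Hn HnV]];
      [now apply closed_compl | exact HV | intros z Hz Vz; apply HfarV; auto |].
    set (L' := filter (fun t => bool_of (slab J t x)) L).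
    destruct (fin_inter_list (slab J) L') as [mask Hmask].
    exists (Cantor.to_nat (n, mask)); unfold box; decode_nat; split.
    + split; [exact Hn |]; apply Hmask; intros t Ht; apply filter_In in Ht; apply bool_of_true, Ht.
    + intros y [Hy Hslabs]; apply Rnot_le_lt; intros Hfar.
      assert (Vy : V (e y)) by (apply HnV; [exact Hy | rewrite <- HV0e; lra]).
      destruct (HL (e y) Vy) as [t [Ht [U [[_ [Htx HUt]] HUy]]]].
      apply (HUt y HUy), (proj1 (Hmask y) Hslabs), filter_In.
      split; [exact Ht | now apply bool_of_true].
Qed.

(* A continuous [f] is coded by the indices of the [phi_i] it factors through
   and by the bits telling which boxes [f] maps into which rational intervals. *)
Lemma continuous_functions_le_c (i0 : Idx) (code : Idx -> cont) :
  (forall i j, code i = code j -> i = j) -> card_CX_le_c tX.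
Proof.
  intros Hcode.
  destruct (choice (fun (f : X -> R) J => continuous_R tX f -> factors_through J f)) as [Jf HJf].
  { intros f; destruct (classic (continuous_R tX f)) as [Hf | Hf].
    - destruct (factors_countably i0 f Hf) as [J HJ]; exists J; auto.
    - exists (fun _ => i0); tauto. }
  exists (fun f => cont_seq (fun k => match k with
                                  | O => fun w => bool_of (bounded_on (box (Jf f)) f w)
                                  | S k => code (Jf f k)
                                  end)).
  intros f1 f2 Hf1 Hf2 Heq; apply cont_seq_inj in Heq.
  assert (HJ : Jf f1 = Jf f2)
    by (apply functional_extensionality; intros k; apply Hcode, (equal_f Heq (S k))).
  apply (network_determines (box (Jf f1))); [now apply box_network, HJf |].
  intros w Hw; pose proof (equal_f (equal_f Heq 0%nat) w) as Hbits; cbn beta iota in Hbits.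
  rewrite <- HJ in Hbits; apply bool_of_true; rewrite <- Hbits; now apply bool_of_true.
Qed.

End SeparatingFamily.

End Fibers.

Lemma separating_family {X : Type} (tX : topology X) : tychonoff tX -> nw_le_c tX ->
  exists Phi : cont -> X -> R, (forall i, continuous_R tX (Phi i)) /\
    (forall x y, x <> y -> exists i, Phi i x <> Phi i y).
Proof.
  intros [HT1 Hreg] [N HN].
  set (Urysohn := fun (c : cont) (h : X -> R) => continuous_R tX h /\
     (forall y, N (cont_proj c 0) y -> h y < 1/3) /\ (forall y, N (cont_proj c 1) y -> 2/3 < h y)).
  destruct (choice (fun c h => continuous_R tX h /\ ((exists h', Urysohn c h') -> Urysohn c h)))
    as [Phi HPhi].
  { intros c; destruct (classic (exists h', Urysohn c h')) as [[h Hh] | Hno].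
    - exists h; split; [apply Hh | auto].
    - exists (fun _ => 0); split; [apply const_continuous | tauto]. }
  exists Phi; split; [intros c; exact (proj1 (HPhi c)) |].
  intros x y Hxy; destruct (HT1 x y Hxy) as [U [HU [Ux Uy]]].
  destruct (Hreg (fun z => ~ U z) x (closed_compl tX U HU)) as [h [Hh [Hx Hc]]]; [tauto |].
  destruct (HN (fun z => h z < 1/3) x) as [i [Hi HiU]]; [exact (Hh _ (R_open_lt _)) | lra |].
  destruct (HN (fun z => 2/3 < h z) y) as [j [Hj HjU]];
    [exact (Hh _ (R_open_gt _)) | rewrite (Hc y Uy); lra |].
  set (c := cont_seq (fun k => match k with O => i | _ => j end)).
  assert (Hc0 : cont_proj c 0 = i) by apply cont_proj_seq.
  assert (Hc1 : cont_proj c 1 = j) by apply cont_proj_seq.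
  assert (Hgood : Urysohn c (Phi c))
    by (apply HPhi; exists h; unfold Urysohn; rewrite Hc0, Hc1; auto).
  exists c; destruct Hgood as [_ [H0 H1]]; rewrite Hc0 in H0; rewrite Hc1 in H1.
  specialize (H0 x Hi); specialize (H1 y Hj); lra.
Qed.

Lemma weight_le_c {X : Type} (tX : topology X) : tychonoff tX -> card_CX_le_c tX -> w_le_c tX.
Proof.
  intros [_ Hreg] [g Hg].
  exists (fun i y => exists U, (exists f, continuous_R tX f /\ g f = i /\ U = (fun z => f z < 1/2)) /\ U y).
  split.
  - intros i; apply open_union; intros U [f [Hf [_ ->]]]; exact (Hf _ (R_open_lt _)).
  - intros U x HU Ux.
    destruct (Hreg (fun z => ~ U z) x (closed_compl tX U HU)) as [h [Hh [Hx Hc]]]; [tauto |].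
    exists (g h); split.
    + exists (fun z => h z < 1/2); split; [exists h; auto | lra].
    + intros y [V [[f [Hf [Hgf ->]]] Hy]]; rewrite (Hg f h Hf Hh Hgf) in Hy.
      apply NNPP; intros Hn; specialize (Hc y Hn); lra.
Qed.

Theorem corollary1 (X K : Type) (tX : topology X) (tK : topology K) (e : X -> K) :
  tychonoff tX ->
  stone_cech tX tK e ->
  nagami_le_omega tK e ->
  nw_le_c tX ->
  card_CX_le_c tX /\ w_le_c tX.
Proof.
  intros HT [HK [_ [_ [_ [Htrace _]]]]] [F [HF Hnag]] Hnw.
  destruct (separating_family tX HT Hnw) as [Phi [HPhi Hsep]].
  assert (HC : card_CX_le_c tX).
  { apply (continuous_functions_le_c tX tK e F HK HF Htrace Hnag Phi HPhi Hsep (fun _ => false) (fun i => i)).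
    auto. }
  split; [exact HC | exact (weight_le_c tX HT HC)].
Qed.
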